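(* Let $1\le k\le N-1$ satisfy $\phi^{k-1}-\phi^k>\phi^k-\phi^{k+1}$, let $F\in\tilde{\mathcal F}^k$, let $\mathcal U$ be an atom of $\mathfrak A_k$, and let $\delta$ be a root of $F$ with $\mathcal U\subseteq\mathcal VT^F_\delta$. Then there exist a set $\mathcal D\subseteq\mathcal VT^F_\delta$ and a forest $G\in\tilde{\mathcal F}^k$ such that the arcs leaving the vertices of $\mathcal N\setminus\mathcal D$ are the same in $G$ and in $F$, $\mathcal U\subseteq\mathcal VT^G_\delta$, and $\mathcal N^{in}_{\mathcal U}(G)=\emptyset$ (no arc of $G$ enters $\mathcal U$).
   Context: $V$ is a digraph with vertex set $\mathcal N$, $|\mathcal N|=N$, real arc weights, having at least one spanning tree. An (entering) forest is a digraph in which every vertex has at most one outgoing arc and there is no directed cycle; its weakly connected components are trees, each with a root (the unique vertex with no outgoing arc). For a root $\delta$ of $F$, $T^F_\delta$ denotes the tree of $F$ containing $\delta$. $\mathcal F^k$ is the set of spanning forests of $V$ with exactly $k$ trees; $\Upsilon^F$ is total arc weight; $\phi^k=\min_{\mathcal F^k}\Upsilon^F$, $\phi^0=\infty$; $\tilde{\mathcal F}^k$ the forests in $\mathcal F^k$ of weight $\phi^k$. $\mathfrak A_k$ is the algebra of subsets of $\mathcal N$ generated by the vertex sets of trees of forests in $\tilde{\mathcal F}^k$; atoms are its minimal nonempty elements. $\mathcal N^{in}_{\mathcal U}(G)$ is the set of tails of arcs of $G$ whose head is in $\mathcal U$ and tail is not. *)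

From mathcomp Require Import all_boot all_order all_algebra.
Set Implicit Arguments. Unset Strict Implicit. Unset Printing Implicit Defensive.
Import Order.TTheory GRing.Theory Num.Theory.
Local Open Scope ring_scope.

Section Forests.
Variables (R : realFieldType) (T : finType).
(* The digraph V: vertex set T (N = #|T|), arc relation [arc], weights [w]. *)
Variables (arc : rel T) (w : T -> T -> R).

(* A spanning subgraph in which every vertex has at most one outgoing arc is
   encoded by F : {ffun T -> option T}: F x = Some y iff (x,y) is an arc of F;
   F x = None iff x has no outgoing arc. *)
Definition step (F : {ffun T -> option T}) (o : option T) : option T :=
  obind F o.

(* Acyclic: following outgoing arcs from any vertex terminates (a directed
   cycle would make the walk run forever; otherwise it ends within N steps). *)
Definition acyclic (F : {ffun T -> option T}) : bool :=
  [forall x, iter #|T| (step F) (Some x) == None].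

Definition is_spanning_forest (F : {ffun T -> option T}) : bool :=
  [forall x, forall y, (F x == Some y) ==> arc x y] && acyclic F.

Definition forest_roots (F : {ffun T -> option T}) : {set T} := [set x | F x == None].

Definition forests (k : nat) : {set {ffun T -> option T}} :=
  [set F | is_spanning_forest F & #|forest_roots F| == k].

Definition weight (F : {ffun T -> option T}) : R :=
  \sum_(x : T) (if F x is Some y then w x y else 0).

(* min on option R with None = +infinity *)
Definition omin (a b : option R) : option R :=
  match a, b with
  | None, _ => b
  | _, None => a
  | Some x, Some y => Some (Order.min x y)
  end.

(* phi k = min weight of a forest with k trees; None stands for +oo
   (the case F^k empty, in particular phi 0 = +oo). *)
Definition phi (k : nat) : option R :=
  \big[omin/None]_(F in forests k) Some (weight F).

Definition opt_forests (k : nat) : {set {ffun T -> option T}} :=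
  [set F in forests k | phi k == Some (weight F)].

(* phi^{k-1} - phi^k > phi^k - phi^{k+1}, with the convention that
   (+oo) - a > b for all finite a, b. *)
Definition gap_cond (k : nat) : Prop :=
  match phi k.-1, phi k, phi k.+1 with
  | None, Some _, Some _ => True
  | Some a, Some b, Some c => b - c < a - b
  | _, _, _ => False
  end.

Definition reach (F : {ffun T -> option T}) (x y : T) : bool :=
  [exists n : 'I_#|T|, iter n (step F) (Some x) == Some y].

Definition VT (F : {ffun T -> option T}) (d : T) : {set T} :=
  [set x | reach F x d].

Definition alg_gens (k : nat) : {set {set T}} :=
  [set A | [exists F in opt_forests k, exists d in forest_roots F, A == VT F d]].

Definition set_algebra_closed (C : {set {set T}}) : bool :=
  [forall A in C, ~: A \in C] && [forall A in C, forall B in C, A :|: B \in C].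

Definition gen_algebra (G : {set {set T}}) : {set {set T}} :=
  \bigcap_(C : {set {set T}} | (G \subset C) && set_algebra_closed C) C.

Definition alg (k : nat) : {set {set T}} := gen_algebra (alg_gens k).

Definition is_atom (Al : {set {set T}}) (U : {set T}) : Prop :=
  [/\ U \in Al, U != set0 &
      forall V, V \in Al -> V != set0 -> V \subset U -> V = U].

Definition has_spanning_tree : Prop := exists F, F \in forests 1.

End Forests.

(* Repair, one at a time, the arcs x -> y entering the atom U.  Since x is not
   in U, some tree P of an optimal k-forest K contains x and misses U (every
   set of the algebra is a union of classes of vertices that no generator
   separates).  Let C be the set of vertices whose walk in the current forest
   G meets U, and swap the arcs leaving X = C :&: P between G and K.  Both
   results are forests, their weights add up to 2 phi^k, and they have k + j
   and k - j roots with j <= 1; the gap condition excludes j = 1, so both are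
   optimal k-forests.  The new forest differs from G only on X, which lies in
   the tree of d in F, keeps U in the tree of d because U is an atom, and its
   set C has lost x.  So the process stops at a forest with no arc entering U. *)

From mathcomp Require Import all_boot all_order all_algebra.
From mathcomp Require Import zify lra.
Import Order.TTheory GRing.Theory Num.Theory.
Set Implicit Arguments. Unset Strict Implicit. Unset Printing Implicit Defensive.

Section Walks.
Variable T : finType.
Implicit Types (F G H : {ffun T -> option T}) (S B : {set T}).

Definition reachable F x y := exists n, iter n (step F) (Some x) = Some y.

Lemma iter_step_None F n : iter n (step F) None = None.
Proof. by elim: n => //= n ->. Qed.

Lemma acyclic_iter F x n : acyclic F -> (#|T| <= n)%N -> iter n (step F) (Some x) = None.
Proof.
move=> /forallP /(_ x) /eqP Fx le_n.
by rewrite -(subnK le_n) iterD Fx iter_step_None.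
Qed.

Lemma reachP F {x y} : acyclic F -> reflect (reachable F x y) (reach F x y).
Proof.
move=> acF; apply: (iffP existsP) => [[n /eqP]|[n Hn]]; first by exists n.
have lt_n : (n < #|T|)%N.
  by rewrite ltnNge; apply/negP => /(acyclic_iter x acF); rewrite Hn.
by exists (Ordinal lt_n); apply/eqP.
Qed.

Lemma reachable_refl F x : reachable F x x.
Proof. by exists 0%N. Qed.

Lemma reachable_trans F x y z : reachable F x y -> reachable F y z -> reachable F x z.
Proof. by case=> n Hn [m Hm]; exists (m + n)%N; rewrite iterD Hn. Qed.

Lemma reachable_step F x y : F x = Some y -> reachable F x y.
Proof. by exists 1%N. Qed.

Lemma reachable_cons F x y z : F x = Some y -> reachable F y z -> reachable F x z.
Proof. by move/reachable_step; apply: reachable_trans. Qed.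

Lemma reachable_inv F x z : reachable F x z ->
  x = z \/ exists2 y, F x = Some y & reachable F y z.
Proof.
case=> -[|n]; first by case; left.
rewrite iterSr /=; case: (F x) => [y Hy|]; last by rewrite iter_step_None.
by right; exists y => //; exists n.
Qed.

Lemma reachable_from_root F x z : F x = None -> reachable F x z -> z = x.
Proof. by move=> Fx /reachable_inv [->//|[y]]; rewrite Fx. Qed.

Lemma reachable_total F v a b :
  reachable F v a -> reachable F v b -> reachable F a b \/ reachable F b a.
Proof.
case=> n Hn [m Hm]; case: (leqP n m) => [le_nm|/ltnW le_mn].
  by left; exists (m - n)%N; rewrite -Hn -iterD subnK.
by right; exists (n - m)%N; rewrite -Hm -iterD subnK.
Qed.

Lemma reachable_root_uniq F v p q : F p = None -> F q = None ->
  reachable F v p -> reachable F v q -> p = q.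
Proof.
move=> Fp Fq vp vq.
by case: (reachable_total vp vq) => [/(reachable_from_root Fp)|/(reachable_from_root Fq)] ->.
Qed.

Lemma reachable_closed F B v y : (forall a b, a \in B -> F a = Some b -> b \in B) ->
  v \in B -> reachable F v y -> y \in B.
Proof.
move=> clB vB [n]; elim: n y => [|n IH] y /=; first by case=> <-.
by case E: (iter n (step F) (Some v)) => [c|] //= Fc; apply: clB (IH _ E) Fc.
Qed.

Lemma reachable_agree F H u v : (forall z, reachable F u z -> H z = F z) ->
  reachable F u v -> reachable H u v.
Proof.
move=> agreeHF [n Hn]; exists n; rewrite -Hn; elim: n {v Hn} => //= n ->.
by case E: (iter n (step F) (Some u)) => [z|] //=; apply: agreeHF; exists n.
Qed.

Lemma rank_iter F (r : T -> nat) : (forall v y, F v = Some y -> (r y < r v)%N) ->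
  forall n a b, iter n (step F) (Some a) = Some b -> (r b + n <= r a)%N.
Proof.
move=> r_decr; elim=> [|n IH] a b /=; first by case=> ->; rewrite addn0.
case E: (iter n (step F) (Some a)) => [c|] //= Fc.
by move: (IH _ _ E) (r_decr _ _ Fc); lia.
Qed.

Lemma rank_reachable F (r : T -> nat) : (forall v y, F v = Some y -> (r y < r v)%N) ->
  forall a b, reachable F a b -> (r b <= r a)%N.
Proof. by move=> r_decr a b [n /(rank_iter r_decr)]; lia. Qed.

(* Only the order of the ranks matters, so they may be compressed below [#|T|]. *)
Lemma rank_acyclic F (r : T -> nat) : (forall v y, F v = Some y -> (r y < r v)%N) ->
  acyclic F.
Proof.
move=> r_decr; pose r' v := #|[set u | (r u < r v)%N]|.
have r'_decr v y : F v = Some y -> (r' y < r' v)%N.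
  move=> /r_decr lt_yv; apply: proper_card; apply/properP; split.
    by apply/subsetP => u; rewrite !inE => /ltn_trans; apply.
  by exists y; rewrite !inE ?lt_yv ?ltnn.
have r'_lt x : (r' x < #|T|)%N.
  rewrite -cardsT; apply: proper_card; apply/properP; split; first exact: subsetT.
  by exists x; rewrite !inE ?ltnn.
apply/forallP => x; apply/eqP; case E: (iter _ _ _) => [z|] //.
by move: (rank_iter r'_decr E) (r'_lt x); lia.
Qed.

Lemma acyclic_rank F : acyclic F -> exists r : T -> nat,
  (forall v, r v <= #|T|)%N /\ (forall v y, F v = Some y -> (r y < r v)%N).
Proof.
move=> acF; have ends v : exists n, iter n (step F) (Some v) == None.
  by exists #|T|; rewrite acyclic_iter.
exists (fun v => ex_minn (ends v)); split => [v|v y Fv].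
  by case: ex_minnP => n _; apply; rewrite acyclic_iter.
case: (ex_minnP (ends y)) => m _ min_m; case: (ex_minnP (ends v)) => -[//|n] /eqP.
by rewrite iterSr /= Fv => Hn _; rewrite ltnS; apply: min_m; apply/eqP.
Qed.

Lemma reachable_root F x : acyclic F -> exists2 r, F r = None & reachable F x r.
Proof.
move=> acF; have ends : exists n, iter n (step F) (Some x) == None.
  by exists #|T|; rewrite acyclic_iter.
case: (ex_minnP ends) => -[//|n] /eqP Hn min_n.
case E: (iter n (step F) (Some x)) => [r|]; last first.
  by have := min_n _ (introT eqP E); rewrite ltnn.
by exists r; [move: Hn; rewrite iterS E | exists n].
Qed.

Definition upstream F S := [set v | [exists u in S, reach F v u]].

Lemma upstreamP F {S v} : acyclic F ->
  reflect (exists2 u, u \in S & reachable F v u) (v \in upstream F S).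
Proof.
move=> acF; rewrite inE; apply: (iffP existsP) => [[u /andP [uS /(reachP acF)]]|[u uS]].
  by exists u.
by move/(reachP acF) => vu; exists u; rewrite uS.
Qed.

Lemma VT_upstream F d : VT F d = upstream F [set d].
Proof.
apply/setP => x; rewrite !inE; apply/idP/existsP => [xd|[u /andP [/set1P -> //]]].
by exists d; rewrite set11.
Qed.

Lemma VTP F {d x} : acyclic F -> reflect (reachable F x d) (x \in VT F d).
Proof. by move=> acF; rewrite inE; apply: reachP. Qed.

Lemma upstream_compl_closed F S v y : acyclic F ->
  v \notin upstream F S -> F v = Some y -> y \notin upstream F S.
Proof.
move=> acF vS Fv; apply: contra vS => /(upstreamP acF) [u uS yu].
by apply/(upstreamP acF); exists u => //; apply: reachable_cons Fv yu.
Qed.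

Lemma upstream_step F S v y : acyclic F ->
  v \in upstream F S -> v \notin S -> F v = Some y -> y \in upstream F S.
Proof.
move=> acF /(upstreamP acF) [u uS /reachable_inv [vu|[y' Fv y'u]]] vS Fv'.
  by move: vS; rewrite vu uS.
by apply/(upstreamP acF); exists u => //; move: Fv; rewrite Fv' => -[->].
Qed.

Lemma VT_step F d v y : acyclic F -> F d = None ->
  v \in VT F d -> F v = Some y -> y \in VT F d.
Proof.
move=> acF Fd; rewrite !VT_upstream => vd Fv; apply: (upstream_step acF vd _ Fv).
by apply: contraPN Fv => /set1P ->; rewrite Fd.
Qed.

Lemma notin_VT_step F d v y : acyclic F -> v \notin VT F d -> F v = Some y -> y \notin VT F d.
Proof. by rewrite !VT_upstream; apply: upstream_compl_closed. Qed.

Lemma VT_agree_sub F G d : acyclic F -> acyclic G ->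
  (forall v, v \notin VT F d -> G v = F v) -> VT G d \subset VT F d.
Proof.
move=> acF acG agreeGF; apply/subsetP => v /(VTP acG) vd; apply: contraT => vF.
have clB a b : a \in ~: VT F d -> G a = Some b -> b \in ~: VT F d.
  by rewrite !in_setC => aF; rewrite agreeGF //; apply: notin_VT_step.
have dF : d \in VT F d by apply/(VTP acF); apply: reachable_refl.
by have := reachable_closed clB _ vd; rewrite !in_setC dF; apply.
Qed.

Lemma upstream_self F S u : acyclic F -> u \in S -> u \in upstream F S.
Proof. by move=> acF uS; apply/(upstreamP acF); exists u => //; apply: reachable_refl. Qed.

Lemma exists_last_visit F S : acyclic F -> S != set0 ->
  exists2 u, u \in S & forall y z, F u = Some y -> reachable F y z -> z \notin S.
Proof.
move=> acF /set0Pn [s sS]; have [r [_ r_decr]] := acyclic_rank acF.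
case: (arg_minnP r sS) => u uS min_u; exists u => // y z Fu yz.
apply/negP => /min_u; move: (rank_reachable r_decr yz) (r_decr _ _ Fu); lia.
Qed.

Definition mix S G H : {ffun T -> option T} := [ffun v => if v \in S then H v else G v].

Lemma mixE S G H v : mix S G H v = if v \in S then H v else G v.
Proof. by rewrite ffunE. Qed.

Lemma forest_roots_mix S G H :
  forest_roots (mix S G H) = (forest_roots G :\: S) :|: (forest_roots H :&: S).
Proof. by apply/setP => v; rewrite !inE mixE; case: (v \in S); rewrite ?andbT ?andbF ?orbF. Qed.

(* A walk of the mixture can leave [S] only into the region [B], which is
   disjoint from [S] and which [G] never leaves; ranks by layers follow. *)
Lemma acyclic_mix S B G H : acyclic G -> acyclic H ->
  (forall v, v \in S -> v \notin B) ->
  (forall v y, v \in B -> G v = Some y -> y \in B) ->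
  (forall v y, v \in S -> H v = Some y -> y \in S :|: B) ->
  acyclic (mix S G H).
Proof.
move=> acG acH SnB clB HS.
have [rG [rG_le rG_decr]] := acyclic_rank acG.
have [rH [rH_le rH_decr]] := acyclic_rank acH.
apply: (@rank_acyclic _ (fun v => if v \in B then rG v
  else if v \in S then #|T|.+1 + rH v else 2 * #|T|.+1 + rG v)%N) => v y.
rewrite mixE => Hy; have := rG_le y; have := rH_le y.
case vS: (v \in S) in Hy *.
  move: (rH_decr _ _ Hy) (HS _ _ vS Hy); rewrite inE (negbTE (SnB _ vS)).
  by case: (y \in S); case: (y \in B) => //=; lia.
case vB: (v \in B); first by rewrite (clB _ _ vB Hy); move: (rG_decr _ _ Hy); lia.
by move: (rG_decr _ _ Hy); case: (y \in B); case: (y \in S) => /=; lia.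
Qed.

End Walks.

Section GeneratedAlgebra.
Variables (T : finType) (Gs : {set {set T}}).
Local Notation Al := (gen_algebra Gs).

Lemma gen_algebra_gen A : A \in Gs -> A \in Al.
Proof. by move=> GsA; apply/bigcapP => C /andP [/subsetP GsC _]; apply: GsC. Qed.

Lemma gen_algebraC A : A \in Al -> ~: A \in Al.
Proof.
move=> /bigcapP AC; apply/bigcapP => C algC.
by case/andP: (algC) => _ /andP [/forallP /(_ A) /implyP -> //]; apply: AC.
Qed.

Lemma gen_algebraU A B : A \in Al -> B \in Al -> A :|: B \in Al.
Proof.
move=> /bigcapP AC /bigcapP BC; apply/bigcapP => C algC.
case/andP: (algC) => _ /andP [_ /forallP /(_ A) /implyP /(_ (AC _ algC))].
by move=> /forallP /(_ B) /implyP; apply; apply: BC.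
Qed.

Lemma gen_algebraI A B : A \in Al -> B \in Al -> A :&: B \in Al.
Proof.
by move=> AAl BAl; rewrite -[A :&: B]setCK setCI gen_algebraC // gen_algebraU // gen_algebraC.
Qed.

(* The sets not separating [a] from [b] form an algebra containing [Gs]. *)
Lemma gen_algebra_inseparable A a b : A \in Al ->
  (forall E, E \in Gs -> (a \in E) = (b \in E)) -> (a \in A) = (b \in A).
Proof.
move=> /bigcapP AC sep_ab; pose C0 := [set E : {set T} | (a \in E) == (b \in E)].
have C0_alg : (Gs \subset C0) && set_algebra_closed C0.
  apply/and3P; split.
  - by apply/subsetP => E /sep_ab; rewrite inE => ->.
  - by apply/forall_inP => E; rewrite !inE => /eqP ->.
  - apply/forall_inP => E; rewrite inE => /eqP abE; apply/forall_inP => E'.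
    by rewrite !inE abE => /eqP ->.
by have := AC _ C0_alg; rewrite inE => /eqP.
Qed.

Lemma atom_sub U A u : is_atom Al U -> A \in Al -> u \in U -> u \in A -> U \subset A.
Proof.
case=> UAl _ Umin AAl uU uA; rewrite -(Umin (U :&: A)) ?subsetIr ?subsetIl //.
  exact: gen_algebraI.
by apply/set0Pn; exists u; rewrite inE uU.
Qed.

End GeneratedAlgebra.

Section OptimalForests.
Variables (R : realFieldType) (T : finType) (arc : rel T) (w : T -> T -> R) (k : nat).
Local Notation opt := (opt_forests arc w k).
Local Notation alg := (alg arc w k).
Implicit Types (G : {ffun T -> option T}).
Local Open Scope ring_scope.

Lemma opt_spanning G : G \in opt -> is_spanning_forest arc G.
Proof. by rewrite !inE => /andP [/andP [-> _] _]. Qed.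

Lemma opt_acyclic G : G \in opt -> acyclic G.
Proof. by move/opt_spanning/andP => []. Qed.

Lemma opt_card_roots G : G \in opt -> #|forest_roots G| = k.
Proof. by rewrite !inE => /andP [/andP [_ /eqP]]. Qed.

Lemma opt_phi G : G \in opt -> phi arc w k = Some (weight w G).
Proof. by rewrite !inE => /andP [_ /eqP]. Qed.

Lemma VT_alg G d : G \in opt -> d \in forest_roots G -> VT G d \in alg.
Proof.
move=> optG rootd; apply: gen_algebra_gen; rewrite inE.
by apply/exists_inP; exists G => //; apply/exists_inP; exists d.
Qed.

(* An atom of the algebra and a vertex outside it are separated by a tree of
   some optimal forest: otherwise no generator separates the vertex from the atom. *)
Lemma atom_separation U x : is_atom alg U -> x \notin U ->
  exists K p, [/\ K \in opt, p \in forest_roots K, x \in VT K p & [disjoint U & VT K p]].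
Proof.
move=> atomU xU; case: (atomU) => UAl /set0Pn [u uU] _.
have [E] : exists2 E, E \in alg_gens arc w k & (x \in E) != (u \in E).
  apply/exists_inP; rewrite -negb_forall_in; apply: contra xU => /forall_inP sep.
  by rewrite (gen_algebra_inseparable UAl (fun E GE => eqP (sep E GE))).
rewrite inE => /exists_inP [K optK /exists_inP [p rootp /eqP ->]] sep_xu.
have acK := opt_acyclic optK.
have in_tree_sub q v : q \in forest_roots K -> v \in U -> v \in VT K q -> U \subset VT K q.
  by move=> rootq; apply: atom_sub atomU (VT_alg optK rootq).
case xp: (x \in VT K p) in sep_xu.
  exists K, p; split => //; rewrite disjoint_subset; apply/subsetP => v vU /=.
  apply/negP => /(in_tree_sub _ _ rootp vU) /subsetP /(_ u uU) up.
  by rewrite up in sep_xu.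
rewrite eq_sym eqbF_neg negbK in sep_xu.
have /subsetP Up := in_tree_sub _ _ rootp uU sep_xu.
have [q Kq xq] := reachable_root x acK.
have rootq : q \in forest_roots K by rewrite inE Kq.
exists K, q; split => //; first exact/(VTP acK).
rewrite disjoint_subset; apply/subsetP => v vU /=; apply/negP => /(VTP acK) vq.
have /(VTP acK) vp := Up _ vU; move: rootp; rewrite inE => /eqP Kp.
by move: xp; rewrite (reachable_root_uniq Kp Kq vp vq) => /(VTP acK); apply.
Qed.

Lemma big_omin_le (I : eqType) (r : seq I) (P : pred I) (f : I -> R) i :
  i \in r -> P i ->
  exists2 c, \big[@omin R/None]_(j <- r | P j) Some (f j) = Some c & c <= f i.
Proof.
elim: r => [//|a r IH]; rewrite in_cons big_cons => /orP [/eqP <-|ir] Pi.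
  rewrite Pi; case: (\big[_/_]_(_ <- r | _) _) => [b|] /=; last by exists (f i).
  by exists (Order.min (f i) b); rewrite ?ge_min ?lexx.
have [c Ec le_c] := IH ir Pi; case: (P a); last by exists c.
by rewrite Ec /=; eexists; [reflexivity | rewrite ge_min le_c orbT].
Qed.

Lemma phi_le j G : G \in forests arc j -> exists2 c, phi arc w j = Some c & c <= weight w G.
Proof. by move=> FG; apply: big_omin_le => //; apply: mem_index_enum. Qed.

End OptimalForests.

Section Exchange.
Variables (R : realFieldType) (T : finType) (arc : rel T) (w : T -> T -> R) (k : nat).
Local Notation opt := (opt_forests arc w k).
Implicit Types (G H : {ffun T -> option T}) (S : {set T}).
Local Open Scope ring_scope.

Lemma spanning_mix S G H : is_spanning_forest arc G -> is_spanning_forest arc H ->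
  acyclic (mix S G H) -> is_spanning_forest arc (mix S G H).
Proof.
move=> /andP [/forallP arcG _] /andP [/forallP arcH _] acGH.
rewrite /is_spanning_forest acGH andbT; apply/forallP => x; rewrite mixE.
by case: (x \in S); [apply: arcH | apply: arcG].
Qed.

Lemma weight_mix S G H :
  weight w (mix S G H) + weight w (mix S H G) = weight w G + weight w H.
Proof.
rewrite /weight -!big_split /=; apply: eq_bigr => v _; rewrite !mixE.
by case: (v \in S); rewrite // addrC.
Qed.

(* Swapping the arcs leaving [S] preserves the total weight and moves at most
   one root from one forest to the other; a moved root would give
   [phi (k+1) + phi (k-1) <= 2 phi k], against the gap condition. *)
Lemma exchange_opt S G H : gap_cond arc w k -> G \in opt -> H \in opt ->
  acyclic (mix S G H) -> acyclic (mix S H G) ->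
  [disjoint forest_roots G & S] -> (#|forest_roots H :&: S| <= 1)%N ->
  mix S G H \in opt.
Proof.
move=> gap optG optH acGH acHG rootsGS rootsHS.
have cardGH : #|forest_roots (mix S G H)| = (k + #|forest_roots H :&: S|)%N.
  rewrite forest_roots_mix (setDidPl rootsGS) cardsU (opt_card_roots optG).
  by rewrite setICA (disjoint_setI0 rootsGS) setI0 cards0 subn0.
have cardHG : #|forest_roots (mix S H G)| = (k - #|forest_roots H :&: S|)%N.
  rewrite forest_roots_mix (disjoint_setI0 rootsGS) setU0 cardsD.
  by rewrite (opt_card_roots optH).
have spGH := spanning_mix (opt_spanning optG) (opt_spanning optH) acGH.
have spHG := spanning_mix (opt_spanning optH) (opt_spanning optG) acHG.
have wHG : weight w H = weight w G by move: (opt_phi optH); rewrite (opt_phi optG) => -[].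
have := weight_mix S G H; rewrite wHG.
move: rootsHS cardGH cardHG; case: #|_| => [|[|//]] _ cardGH cardHG wsum.
  have [c phiGH le_c] : exists2 c, phi arc w k = Some c & c <= weight w (mix S G H).
    by apply: phi_le; rewrite inE spGH cardGH addn0 /=.
  have [c' phiHG le_c'] : exists2 c, phi arc w k = Some c & c <= weight w (mix S H G).
    by apply: phi_le; rewrite inE spHG cardHG subn0 /=.
  move: phiGH phiHG; rewrite (opt_phi optG) => -[eq_c] [eq_c']; subst c c'.
  rewrite inE inE spGH cardGH addn0 eqxx (opt_phi optG) /=; apply/eqP; congr Some; lra.
have [c phic le_c] : exists2 c, phi arc w k.+1 = Some c & c <= weight w (mix S G H).
  by apply: phi_le; rewrite inE spGH cardGH addn1 /=.
have [a phia le_a] : exists2 a, phi arc w k.-1 = Some a & a <= weight w (mix S H G).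
  by apply: phi_le; rewrite inE spHG cardHG subn1 /=.
by move: gap; rewrite /gap_cond phia phic (opt_phi optG); lra.
Qed.

End Exchange.

Section Descent.
Variables (R : realFieldType) (T : finType) (arc : rel T) (w : T -> T -> R) (k : nat).
Variables (F : {ffun T -> option T}) (U : {set T}) (d : T).
Hypotheses (gap : gap_cond arc w k) (atomU : is_atom (alg arc w k) U).
Hypothesis optF : F \in opt_forests arc w k.
Local Notation opt := (opt_forests arc w k).

Definition admissible G := [/\ G \in opt, forall x, x \notin VT F d -> G x = F x,
  d \in forest_roots G & U \subset VT G d].

Section OneExchange.
Variables (G K : {ffun T -> option T}) (p : T).
Hypotheses (admG : admissible G) (optK : K \in opt) (rootp : p \in forest_roots K).
Hypothesis UP : [disjoint U & VT K p].

Local Notation C := (upstream G U).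
Local Notation P := (VT K p).
Local Notation X := (C :&: P).

Let optG : G \in opt. Proof. by case: admG. Qed.
Let acG : acyclic G. Proof. exact: opt_acyclic optG. Qed.
Let acK : acyclic K. Proof. exact: opt_acyclic optK. Qed.
Let Kp : K p = None. Proof. by apply/eqP; move: rootp; rewrite inE. Qed.

Let X_sub_C v : v \in X -> v \in C. Proof. by rewrite in_setI => /andP []. Qed.
Let X_sub_P v : v \in X -> v \in P. Proof. by rewrite in_setI => /andP []. Qed.

Lemma X_notin_U v : v \in X -> v \notin U.
Proof. by move/X_sub_P/(disjointFl UP) ->. Qed.

Lemma acyclic_exchange : acyclic (mix X G K).
Proof.
apply: (@acyclic_mix _ _ (~: C)) => // [v|v y|v y].
- by rewrite in_setI in_setC => /andP [->].
- by rewrite !in_setC; apply: upstream_compl_closed.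
- rewrite in_setI => /andP [_ vP] Kv; have yP := VT_step acK Kp vP Kv.
  by rewrite in_setU in_setI in_setC yP; case: (y \in C).
Qed.

Lemma acyclic_exchange_dual : acyclic (mix X K G).
Proof.
apply: (@acyclic_mix _ _ (~: P)) => // [v|v y|v y].
- by rewrite in_setI in_setC => /andP [_ ->].
- by rewrite !in_setC; apply: notin_VT_step.
- move=> vX Gv; have yC := upstream_step acG (X_sub_C vX) (X_notin_U vX) Gv.
  by rewrite in_setU in_setI in_setC yC; case: (y \in P).
Qed.

Lemma roots_disjoint_exchange : [disjoint forest_roots G & X].
Proof.
rewrite disjoint_subset; apply/subsetP => v; rewrite inE => /eqP Gv /=.
apply/negP => vX; have /(upstreamP acG) [u uU vu] := X_sub_C vX.
by move: (X_notin_U vX); rewrite -(reachable_from_root Gv vu) uU.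
Qed.

Lemma card_roots_exchange : (#|forest_roots K :&: X| <= 1)%N.
Proof.
rewrite -(cards1 p); apply: subset_leq_card; apply/subsetP => v.
rewrite !in_setI => /and3P [rootv _ /(VTP acK) vp]; move: rootv.
by rewrite !inE => /eqP Kv; rewrite (reachable_from_root Kv vp) eqxx.
Qed.

Lemma opt_exchange : mix X G K \in opt.
Proof.
exact: exchange_opt gap optG optK acyclic_exchange acyclic_exchange_dual
  roots_disjoint_exchange card_roots_exchange.
Qed.

Lemma exchange_sub_VT : X \subset VT F d.
Proof.
case: admG => _ agreeGF _ /subsetP UGd.
apply/subsetP => v /X_sub_C /(upstreamP acG) [u uU vu].
apply: (subsetP (VT_agree_sub (opt_acyclic optF) acG agreeGF)).
by apply/(VTP acG); apply: reachable_trans vu _; apply/(VTP acG); apply: UGd.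
Qed.

Lemma admissible_exchange : admissible (mix X G K).
Proof.
case: (admG) => _ agreeGF rootd /subsetP UGd.
have M_off_X v : v \notin X -> mix X G K v = G v by rewrite mixE => /negbTE ->.
have dX : d \notin X by rewrite (disjointFr roots_disjoint_exchange rootd).
have rootdM : d \in forest_roots (mix X G K) by move: rootd; rewrite !inE M_off_X.
split=> [||//|]; first exact: opt_exchange.
  move=> v vF; rewrite M_off_X ?agreeGF //.
  by apply: contra vF; apply: (subsetP exchange_sub_VT).
(* After its last visit to U, the G-walk from u never meets C again, so it is
   also an M-walk. *)
have [|u uU last_u] := exists_last_visit acG (S := U); first by case: atomU.
apply: (atom_sub atomU (VT_alg opt_exchange rootdM) uU).
have /(VTP acG) ud := UGd _ uU.
apply/(VTP (opt_acyclic opt_exchange)); apply: reachable_agree ud => z uz.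
apply: M_off_X; apply/negP => zX; case/reachable_inv: uz => [uz|[y Gu yz]].
  by move: (X_notin_U zX); rewrite -uz uU.
have /(upstreamP acG) [u' u'U zu'] := X_sub_C zX.
by move: (last_u _ _ Gu (reachable_trans yz zu')); rewrite u'U.
Qed.

Lemma upstream_exchange : upstream (mix X G K) U \subset C :\: X.
Proof.
have acM := opt_acyclic opt_exchange.
have clB a b : a \in ~: C :|: X -> mix X G K a = Some b -> b \in ~: C :|: X.
  rewrite mixE !in_setU !in_setC; case: (boolP (a \in X)) => [/X_sub_P aP _ Ka|_].
    by rewrite in_setI (VT_step acK Kp aP Ka) andbT; case: (b \in C).
  by rewrite orbF => aC Ga; rewrite (upstream_compl_closed acG aC Ga).
apply/subsetP => v /(upstreamP acM) [u uU vu]; rewrite in_setD andbC.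
suff : v \notin ~: C :|: X by rewrite in_setU in_setC negb_or negbK.
apply/negP => /(reachable_closed clB)/(_ vu).
by rewrite in_setU in_setC (upstream_self acG uU) /= => /X_notin_U; rewrite uU.
Qed.

End OneExchange.

Lemma admissible_descent G x y : admissible G -> x \notin U -> G x = Some y -> y \in U ->
  exists2 G', admissible G' & upstream G' U \proper upstream G U.
Proof.
move=> admG xU Gx yU; have acG : acyclic G by case: admG => /opt_acyclic.
have [K [p [optK rootp xp UP]]] := atom_separation atomU xU.
have xC : x \in upstream G U.
  by apply/(upstreamP acG); exists y => //; apply: reachable_step.
exists (mix (upstream G U :&: VT K p) G K); first exact: admissible_exchange.
have sub := upstream_exchange admG optK rootp UP.
apply/properP; split; first exact: subset_trans sub (subsetDl _ _).
exists x => //; apply/negP => /(subsetP sub).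
by rewrite in_setD in_setI xC xp.
Qed.

Lemma admissible_no_entering_arc G : admissible G ->
  exists2 G', admissible G' & forall x y, x \notin U -> G' x = Some y -> y \notin U.
Proof.
have [n] := ubnP #|upstream G U|; elim: n G => // n IH G lt_n admG.
have [[x y] /= /and3P [xU /eqP Gx yU] | noarc] :=
  pickP [pred xy : T * T | [&& xy.1 \notin U, G xy.1 == Some xy.2 & xy.2 \in U]].
  have [G' admG' ltG'] := admissible_descent admG xU Gx yU.
  by apply: (IH G') => //; apply: leq_trans (proper_card ltG') _.
exists G => // x y xU Gx; apply/negP => yU.
by have := noarc (x, y); rewrite /= xU Gx eqxx yU.
Qed.

End Descent.

Theorem theorem4 (R : realFieldType) (T : finType) (arc : rel T)
    (w : T -> T -> R) (k : nat) (F : {ffun T -> option T}) (U : {set T}) (d : T) :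
  has_spanning_tree arc ->
  (1 <= k)%N -> (k <= #|T| - 1)%N ->
  gap_cond arc w k ->
  F \in opt_forests arc w k ->
  is_atom (alg arc w k) U ->
  d \in forest_roots F ->
  U \subset VT F d ->
  exists (D : {set T}) (G : {ffun T -> option T}),
    [/\ D \subset VT F d,
        G \in opt_forests arc w k,
        (forall x, x \notin D -> G x = F x),
        d \in forest_roots G /\ U \subset VT G d &
        (forall x y, x \notin U -> G x = Some y -> y \notin U)].
Proof.
move=> _ _ _ gap optF atomU rootd UF.
have admF : admissible arc w k F U d F by split.
have [G [optG agreeGF rootdG UG] closedU] := admissible_no_entering_arc gap atomU optF admF.
by exists (VT F d), G.
Qed.
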